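(* Let $P(x)=a_nx^n+\cdots+a_1x$ be a nonconstant polynomial with nonnegative integer coefficients, $a_n\ne0$, and content $\gcd(a_n,\dots,a_1)=1$. Let $(a,b)\in\mathbb{N}^2$, and for $1\le t<a$ set $d_t=\dfrac{P(a)}{\gcd(P(a),P(t))}$ and $\mathscr{L}_P(a)=\operatorname{lcm}\{d_t:1\le t<a\}$. If $\gcd(b,\mathscr{L}_P(a))=1$, then \[ \frac{b\,P(t)}{P(a)}\notin\mathbb{Z}\quad\text{for all integers } 1\le t<a, \] and hence $(a,b)$ is $\mathcal{F}(a_n,\dots,a_1)$-visible.
   Context: $\mathbb{N}$ denotes the positive integers; $\operatorname{lcm}$ of the empty set is $1$. The family $\mathcal{F}(a_n,\dots,a_1)=\{y=q(a_nx^n+\cdots+a_1x): q\in\mathbb{Q}^+\}$. A point $(r,s)\in\mathbb{N}^2$ is $\mathcal{F}(a_n,\dots,a_1)$-visible if there is $q\in\mathbb{Q}^+$ with $s=q(a_nr^n+\cdots+a_1r)$ and no other point of $\mathbb{N}^2$ lies on the curve $y=q(a_nx^n+\cdots+a_1x)$ between the origin and $(r,s)$. *)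

From HB Require Import structures.
From mathcomp Require Import all_boot all_order all_algebra.
Set Implicit Arguments. Unset Strict Implicit. Unset Printing Implicit Defensive.
Import Order.TTheory GRing.Theory Num.Theory.
Local Open Scope ring_scope.

(* The polynomial P(x) = a_n x^n + ... + a_1 x is represented by P : {poly int}
   with P`_0 = 0.  Evaluation at a natural number r, cast into the rationals. *)
Definition evalQ (P : {poly int}) (r : nat) : rat := (P.[r%:Z])%:~R.

Definition content_pos (P : {poly int}) : nat :=
  \big[gcdn/0%N]_(1 <= i < size P) absz P`_i.

Definition dP (P : {poly int}) (a t : nat) : nat :=
  (absz P.[a%:Z] %/ gcdn (absz P.[a%:Z]) (absz P.[t%:Z]))%N.

Definition LP (P : {poly int}) (a : nat) : nat :=
  \big[lcmn/1%N]_(1 <= t < a) dP P a t.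

(* (r,s) in N^2 (positive integers) is F(a_n,...,a_1)-visible: there is q in Q^+
   with s = q P(r), and no other point (r',s') of N^2 lies on y = q P(x) between
   the origin and (r,s), i.e. with 0 < r' < r. *)
Definition visible (P : {poly int}) (r s : nat) : Prop :=
  (0 < r)%N /\ (0 < s)%N /\
  exists q : rat, 0 < q /\ s%:R = q * evalQ P r /\
    forall r' s' : nat, (0 < r')%N -> (0 < s')%N -> (r' < r)%N ->
      s'%:R <> q * evalQ P r'.

From HB Require Import structures.
From mathcomp Require Import all_boot all_order all_algebra.

Set Implicit Arguments.
Unset Strict Implicit.
Unset Printing Implicit Defensive.

Import Order.TTheory GRing.Theory Num.Theory.
Local Open Scope ring_scope.

(* If P(a) divided b P(t), then, as it also divides b P(a), it would divide
   b gcd(P(a), P(t)); so d_t would divide b, and d_t | L_P(a) being coprime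
   to b forces d_t = 1, i.e. P(a) | P(t).  This is impossible because a
   polynomial with nonnegative coefficients is strictly increasing on the
   nonnegative reals, whence 0 < P(t) < P(a).  Visibility follows: a lattice
   point (r, s) with r < a on y = b P(x) / P(a) would make b P(r) / P(a) an
   integer. *)

Lemma ltr_horner_nneg_coef (R : numDomainType) (P : {poly R}) (x y : R) :
  (1 < size P)%N -> (forall i, 0 <= P`_i) -> 0 <= x -> x < y -> P.[x] < P.[y].
Proof.
move=> sizeP P_ge0 x_ge0 lt_xy; have y_ge0 := le_trans x_ge0 (ltW lt_xy).
have [n sizePE] : exists n, size P = n.+2 by exists (size P).-2; case: (size P) sizeP => [|[]].
have lead_gt0 : 0 < P`_n.+1.
  rewrite lt_def P_ge0 andbT; have := lead_coef_eq0 P; rewrite lead_coefE sizePE /= => ->.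
  by rewrite -size_poly_eq0 sizePE.
rewrite !horner_coef sizePE [X in X < _]big_ord_recr [X in _ < X]big_ord_recr /=.
apply: ler_ltD; last by rewrite ltr_pM2l // ltrXn2r.
by apply: ler_sum => i _; rewrite ler_wpM2l // lerXn2r ?nnegrE // ltW.
Qed.

Lemma dvdn_mul_coprime_quo_gcd m n b :
  coprime b (m %/ gcdn m n) -> (m %| b * n)%N = (m %| n)%N.
Proof.
move=> co_b_d; apply/idP/idP => [m_bn|]; last exact: dvdn_mull.
have [g0|g_gt0] := posnP (gcdn m n).
  by move: (dvdn_gcdl m n) (dvdn_gcdr m n); rewrite g0 !dvd0n => /eqP-> /eqP->.
have mE : (m %/ gcdn m n * gcdn m n)%N = m by rewrite divnK // dvdn_gcdl.
have m_bg : (m %| b * gcdn m n)%N by rewrite muln_gcdr dvdn_gcd m_bn dvdn_mull.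
have d_b : (m %/ gcdn m n %| b)%N by rewrite -(dvdn_pmul2r g_gt0) mE.
have := coprime_dvdl d_b co_b_d; rewrite /coprime gcdnn => /eqP d1.
by rewrite -mE d1 mul1n dvdn_gcdr.
Qed.

Lemma Qint_dvdzE (m d : int) :
  d != 0 -> ((m%:~R / d%:~R : rat) \is a Num.int) = (d %| m)%Z.
Proof.
move=> d_neq0; apply/idP/idP => [/intrP[z]|]; last exact: Qint_dvdz.
move/(canRL (divfK _)); rewrite intr_eq0 -intrM => /(_ d_neq0) /intr_inj ->.
exact: dvdz_mull.
Qed.

Lemma dP_dvd_LP P a t : (1 <= t < a)%N -> (dP P a t %| LP P a)%N.
Proof. by move=> t_in; rewrite /LP (big_rem t) ?mem_index_iota //= dvdn_lcml. Qed.

Section NonnegCoefPoly.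

Variable P : {poly int}.
Hypothesis sizeP : (1 < size P)%N.
Hypothesis P_ge0 : forall i, 0 <= P`_i.

Lemma horner_nat_gt0 (r : nat) : (0 < r)%N -> 0 < P.[r%:Z].
Proof.
move=> r_gt0; have lt_P0Pr : P.[0] < P.[r%:Z] by apply: ltr_horner_nneg_coef; rewrite ?ltz_nat.
by apply: le_lt_trans lt_P0Pr; rewrite horner_coef0.
Qed.

Lemma ratio_not_Qint (a b t : nat) : (1 <= t < a)%N -> coprime b (LP P a) ->
  b%:R * evalQ P t / evalQ P a \isn't a Num.int.
Proof.
move=> t_in co_b_L; have /andP[t_gt0 lt_ta] := t_in.
have Pt_gt0 := horner_nat_gt0 t_gt0.
have lt_PtPa : P.[t%:Z] < P.[a%:Z] by apply: ltr_horner_nneg_coef; rewrite ?ltz_nat ?ler0n.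
have Pa_gt0 := lt_trans Pt_gt0 lt_PtPa.
rewrite /evalQ -[b%:R]/(b%:~R : rat) -intrM Qint_dvdzE ?gt_eqF // dvdzE abszM absz_nat.
rewrite dvdn_mul_coprime_quo_gcd; last exact: coprime_dvdr (dP_dvd_LP P t_in) co_b_L.
apply/negP => /dvdn_leq; rewrite absz_gt0 gt_eqF // leqNgt -ltz_nat.
by rewrite !gez0_abs ?ltW // lt_PtPa => /(_ isT).
Qed.

Lemma visible_of_ratio_not_Qint (a b : nat) : (0 < a)%N -> (0 < b)%N ->
  (forall t : nat, (1 <= t < a)%N -> b%:R * evalQ P t / evalQ P a \isn't a Num.int) ->
  visible P a b.
Proof.
move=> a_gt0 b_gt0 not_int; have Pa_gt0 : 0 < evalQ P a by rewrite ltr0z horner_nat_gt0.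
do 2!split => //; exists (b%:R / evalQ P a); split; first by rewrite divr_gt0 ?ltr0n.
split=> [|r s r_gt0 _ lt_ra sE]; first by rewrite divfK ?gt_eqF.
by have := not_int r; rewrite r_gt0 lt_ra mulrAC -sE natr_int => /(_ isT).
Qed.

End NonnegCoefPoly.

Theorem theorem3p6 (P : {poly int}) (a b : nat) :
  (2 <= size P)%N ->                       (* nonconstant, a_n = lead_coef P <> 0 *)
  P`_0 = 0 ->                              (* no constant term *)
  (forall i, 0 <= P`_i) ->                 (* nonnegative integer coefficients *)
  content_pos P = 1%N ->                   (* gcd(a_n, ..., a_1) = 1 *)
  (0 < a)%N -> (0 < b)%N ->                (* (a,b) in N^2 *)
  coprime b (LP P a) ->
  (forall t : nat, (1 <= t < a)%N ->
     (b%:R * evalQ P t / evalQ P a) \isn't a Num.int) /\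
  visible P a b.
Proof.
move=> sizeP _ P_ge0 _ a_gt0 b_gt0 co_b_L.
have not_int t (t_in : (1 <= t < a)%N) := ratio_not_Qint sizeP P_ge0 t_in co_b_L.
by split=> //; apply: visible_of_ratio_not_Qint.
Qed.
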